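(* Let $G$ be a finite simple graph of order $p$, and let $\mathbb{F}$ be a field with $\operatorname{char}\mathbb{F}\neq 2$ such that either $\operatorname{char}\mathbb{F}=0$ or $p<2+\operatorname{char}\mathbb{F}$. Then a linear functional $\lambda$ on $U_G$ is a short functional if and only if there exist an edge $[a,b]$ of $G$ and a nonzero scalar $\alpha\in\mathbb{F}$ such that $\lambda(a)=\lambda(b)=\alpha$ and $\lambda(c)=0$ for every vertex $c\notin\{a,b\}$.
   Context: $G$ has vertex set $VG$ and edge set $EG$; the edge with endpoints $x,y$ is written $[x,y]$, and $x\sim y$ means $x,y$ are adjacent. $U_G$ denotes the $\mathbb{F}$-vector space with basis $VG$ (formal linear combinations of vertices). A short functional is a nonzero linear functional $\lambda$ on $U_G$ satisfying: (1) if $x\neq y$ are nonadjacent vertices, then $\lambda(x)=0$ or $\lambda(y)=0$; (2) if $\lambda(x)\neq 0$, then $\lambda(x)=\sum_{t\sim x}\lambda(t)$, the sum over the vertices $t$ adjacent to $x$. (These are exactly the functionals $\lambda$ for which, with $\mu([x,y])=\lambda(x)\lambda(y)$ on edges, the map $u+\mathfrak{z}\mapsto\lambda(u)r+\mu(\mathfrak{z})\mathfrak{s}$ is a homomorphism of the normal graph algebra of $G$ into the algebra with basis $r,\mathfrak{s}$ and sole nonzero product $r^2=\mathfrak{s}$.) *)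

From mathcomp Require Import all_boot all_order all_algebra.
Set Implicit Arguments. Unset Strict Implicit. Unset Printing Implicit Defensive.
Import GRing.Theory.
Local Open Scope ring_scope.

(* A linear functional on U_G (the F-vector space
   with basis V) is determined by, and identified with, its values on the
   basis, i.e. a function lam : V -> F. *)

Definition simple_graph (V : finType) (e : rel V) : Prop :=
  symmetric e /\ irreflexive e.

Definition short_functional (F : fieldType) (V : finType) (e : rel V)
    (lam : V -> F) : Prop :=
  [/\ (exists x, lam x != 0),
      (forall x y, x != y -> ~~ e x y -> lam x = 0 \/ lam y = 0) &
      (forall x, lam x != 0 -> lam x = \sum_(t | e x t) lam t)].

From mathcomp Require Import all_boot all_order all_algebra.
Set Implicit Arguments. Unset Strict Implicit. Unset Printing Implicit Defensive.
Import GRing.Theory.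
Local Open Scope ring_scope.

(* If [lam x != 0], condition (1) kills [lam t] for every non-neighbour [t]
   of [x], so condition (2) says [lam x = T - lam x] with [T] the sum of all
   values: as [2 != 0], every nonzero value equals [T / 2].  Hence
   [T = (T / 2) *+ s] where [s] is the size of the support, i.e. [s%:R = 2]
   in [F]; the hypothesis on the characteristic forces [s = 2], and
   condition (1) makes the two support vertices adjacent. *)

Lemma natf_eq0_lt_pchar (F : fieldType) (n : nat) :
    (forall q : nat, q \notin [pchar F]) \/
    (exists2 q : nat, q \in [pchar F] & (n < q)%N) ->
  (n%:R == 0 :> F) = (n == 0%N).
Proof.
case=> [pchar0 | [q q_char n_lt_q]].
  by apply: (pcharf0P F).1 => q; rewrite (negbTE (pchar0 q)).
rewrite -(dvdn_pcharf q_char).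
have [-> | n_gt0] := posnP n; first by rewrite dvdn0.
by rewrite gtnNdvd.
Qed.

Lemma natf_eq2_small (F : fieldType) (N k : nat) :
    (forall q : nat, q \notin [pchar F]) \/
    (exists q : nat, q \in [pchar F] /\ (N < 2 + q)%N) ->
  (0 < k <= N)%N -> k%:R = 2%:R :> F -> k = 2%N.
Proof.
move=> Hchar /andP[k_gt0 k_leN] k2.
have [k_lt2 | k_ge2] := ltnP k 2.
  have k1 : k = 1%N by case: k k_gt0 k_lt2 {k_leN k2} => [|[]].
  move: k2; rewrite k1 -[2%:R]/(1 + 1 : F) -{1}[1]addr0 => /addrI/eqP.
  by rewrite eq_sym oner_eq0.
have small_char : (forall q : nat, q \notin [pchar F]) \/
    (exists2 q : nat, q \in [pchar F] & (k - 2 < q)%N).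
  case: Hchar => [pchar0 | [q [q_char N_lt]]]; [by left | right; exists q => //].
  by rewrite ltn_subLR // (leq_ltn_trans k_leN N_lt).
have : (k - 2 == 0)%N.
  by rewrite -(natf_eq0_lt_pchar small_char) natrB // k2 subrr.
by rewrite subn_eq0 => k_le2; apply/eqP; rewrite eqn_leq k_le2.
Qed.

Lemma sum_const_on_support (V : finType) (F : fieldType) (lam : V -> F)
    (alpha : F) :
    (forall x, lam x != 0 -> lam x = alpha) ->
  \sum_t lam t = alpha *+ #|[set x | lam x != 0]|.
Proof.
move=> lam_supp; set S := [set x | lam x != 0].
rewrite (bigID (mem S)) /= [X in _ + X]big1 => [|t]; last first.
  by rewrite inE negbK => /eqP.
by rewrite addr0 -sumr_const; apply: eq_bigr => t; rewrite inE => /lam_supp.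
Qed.

Section ShortFunctionals.

Variables (V : finType) (e : rel V) (F : fieldType).
Hypotheses (e_sym : symmetric e) (e_irr : irreflexive e).
Implicit Types (lam : V -> F) (a b x : V).

Lemma sum_adj_support lam x :
    (forall x y, x != y -> ~~ e x y -> lam x = 0 \/ lam y = 0) -> lam x != 0 ->
  \sum_(t | e x t) lam t = \sum_t lam t - lam x.
Proof.
move=> nonadj_zero lam_x; rewrite [in RHS](bigD1 x) //= addrAC subrr add0r.
rewrite big_mkcond [RHS]big_mkcond; apply: eq_bigr => t _.
have [-> | t_neq_x] := eqVneq t x; first by rewrite e_irr.
case e_xt: (e x t) => //.
have [lam_x0 | //] : lam x = 0 \/ lam t = 0.
  by apply: nonadj_zero; rewrite ?e_xt // eq_sym.
by rewrite lam_x0 eqxx in lam_x.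
Qed.

Lemma short_functional_value lam x :
  short_functional e lam -> lam x != 0 -> lam x *+ 2 = \sum_t lam t.
Proof.
case=> _ nonadj_zero lam_sum lam_x.
by rewrite mulr2n {1}(lam_sum x lam_x) sum_adj_support // subrK.
Qed.

Lemma short_functional_const lam x y :
    2%:R != 0 :> F -> short_functional e lam -> lam x != 0 -> lam y != 0 ->
  lam x = lam y.
Proof.
move=> two_neq0 lam_short lam_x lam_y; apply: (mulIf two_neq0).
by rewrite !mulr_natr !short_functional_value.
Qed.

Lemma short_functional_support_card lam :
    2%:R != 0 :> F -> short_functional e lam ->
  #|[set x | lam x != 0]|%:R = 2%:R :> F.
Proof.
move=> two_neq0 lam_short; have [[x0 lam_x0] _ _] := lam_short.
have sum_supp : \sum_t lam t = lam x0 *+ #|[set x | lam x != 0]|.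
  by apply: sum_const_on_support => x lam_x; apply: short_functional_const.
apply: (mulIf lam_x0); rewrite !mulr_natl -sum_supp.
by rewrite short_functional_value.
Qed.

Lemma short_functional_edge lam :
    2%:R != 0 :> F -> #|[set x | lam x != 0]| = 2%N ->
    short_functional e lam ->
  exists a b alpha, [/\ e a b, alpha != 0, lam a = alpha, lam b = alpha &
    forall c, c != a -> c != b -> lam c = 0].
Proof.
move=> two_neq0 supp2 lam_short; have [_ nonadj_zero _] := lam_short.
have [a [b [a_neq_b supp_ab]]] :
    exists a b, a != b /\ [set x | lam x != 0] = [set a; b].
  by apply/cards2P; rewrite supp2.
have in_supp c : (lam c != 0) = (c \in [set a; b]) by rewrite -supp_ab inE.
have lam_a : lam a != 0 by rewrite in_supp !inE eqxx.
have lam_b : lam b != 0 by rewrite in_supp !inE eqxx orbT.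
exists a, b, (lam a); split=> //.
- by apply/negPn/negP => /(nonadj_zero _ _ a_neq_b)[]/eqP; apply/negP.
- exact: short_functional_const.
- move=> c c_neq_a c_neq_b; apply/eqP; apply: contraNT c_neq_a.
  by rewrite in_supp !inE (negPf c_neq_b) orbF.
Qed.

Lemma edge_short_functional lam a b alpha :
    e a b -> alpha != 0 -> lam a = alpha -> lam b = alpha ->
    (forall c, c != a -> c != b -> lam c = 0) ->
  short_functional e lam.
Proof.
move=> e_ab alpha_neq0 lam_a lam_b lam_off.
have a_neq_b : a != b by apply: contraTneq e_ab => ->; rewrite e_irr.
have supp c : lam c != 0 -> c = a \/ c = b.
  move=> lam_c; have [|c_neq_a] := eqVneq c a; first by left.
  have [|c_neq_b] := eqVneq c b; first by right.
  by rewrite lam_off ?eqxx in lam_c.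
have edge_sum x y : e x y -> lam x = alpha -> lam y = alpha ->
    (forall c, c != x -> c != y -> lam c = 0) -> lam x = \sum_(t | e x t) lam t.
  move=> e_xy lam_x lam_y lam_off'; rewrite (bigD1 y) //= big1 ?addr0 ?lam_x //.
  move=> t /andP[e_xt t_neq_y]; apply: lam_off' => //.
  by apply: contraTneq e_xt => ->; rewrite e_irr.
split.
- by exists a; rewrite lam_a.
- move=> x y x_neq_y nxy.
  have [|lam_x] := eqVneq (lam x) 0; first by left.
  have [|lam_y] := eqVneq (lam y) 0; first by right.
  exfalso; move/negP: nxy; apply.
  by move: x_neq_y; case: (supp x lam_x) => ->; case: (supp y lam_y) => ->;
    rewrite ?eqxx // e_sym.
- move=> x /supp[] ->; first exact: (edge_sum a b).
  apply: (edge_sum b a) => //; first by rewrite e_sym.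
  by move=> c c_neq_b c_neq_a; apply: lam_off.
Qed.

End ShortFunctionals.

Theorem theorem4p1 (V : finType) (e : rel V) (HG : simple_graph e)
    (F : fieldType)
    (Hchar2 : (2 \notin [pchar F])%N)
    (Hchar : (forall q : nat, q \notin [pchar F]) \/
             (exists q : nat, q \in [pchar F] /\ (#|V| < 2 + q)%N))
    (lam : V -> F) :
  short_functional e lam <->
  exists (a b : V) (alpha : F),
    [/\ e a b, alpha != 0, lam a = alpha, lam b = alpha &
        forall c : V, c != a -> c != b -> lam c = 0].
Proof.
have [e_sym e_irr] := HG.
have two_neq0 : 2%:R != 0 :> F.
  by apply: contraNneq Hchar2 => two0; rewrite inE /= two0 eqxx.
split=> [lam_short | [a [b [alpha [e_ab alpha_neq0 lam_a lam_b lam_off]]]]].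
- apply: short_functional_edge => //.
  have [[x0 lam_x0] _ _] := lam_short.
  apply: (natf_eq2_small Hchar); last exact: short_functional_support_card.
  by rewrite max_card andbT; apply/card_gt0P; exists x0; rewrite inE.
- exact: (edge_short_functional e_sym e_irr e_ab alpha_neq0 lam_a lam_b).
Qed.
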